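(* Let $G=(V,E)$ be a directed graph and $L\subseteq V$ a set of landmark vertices. For each $w\in V$ let $\mathrm{DL}_{in}(w)=\{l\in L : l \text{ reaches } w\}$ and $\mathrm{DL}_{out}(w)=\{l\in L : w \text{ reaches } l\}$. For $a,b\in V$ say that $\mathrm{DLIntersec}(a,b)$ is true iff $\mathrm{DL}_{out}(a)\cap\mathrm{DL}_{in}(b)\neq\emptyset$. If $\mathrm{DLIntersec}(x,y)$ is false and at least one of $\mathrm{DLIntersec}(x,x)$, $\mathrm{DLIntersec}(y,y)$ is true, then $x$ does not reach $y$ in $G$.
   Context: A vertex $a$ reaches a vertex $b$ in a directed graph if there is a directed path from $a$ to $b$; every vertex reaches itself. *)

From Stdlib Require Import Relations.

Definition reaches {V : Type} (E : V -> V -> Prop) (a b : V) : Prop :=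
  clos_refl_trans V E a b.

Definition DL_in {V : Type} (E : V -> V -> Prop) (L : V -> Prop) (w : V) : V -> Prop :=
  fun l => L l /\ reaches E l w.

Definition DL_out {V : Type} (E : V -> V -> Prop) (L : V -> Prop) (w : V) : V -> Prop :=
  fun l => L l /\ reaches E w l.

Definition DLIntersec {V : Type} (E : V -> V -> Prop) (L : V -> Prop) (a b : V) : Prop :=
  exists l, DL_out E L a l /\ DL_in E L b l.

From Stdlib Require Import Relations.

Lemma DLIntersec_reaches_r {V : Type} (E : V -> V -> Prop) (L : V -> Prop) (a b c : V) :
  DLIntersec E L a b -> reaches E b c -> DLIntersec E L a c.
Proof.
  intros [l [Hout [Hl Hlb]]] Hbc.
  exists l; split; [exact Hout | split; [exact Hl | exact (rt_trans _ _ _ _ _ Hlb Hbc)]].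
Qed.

Lemma DLIntersec_reaches_l {V : Type} (E : V -> V -> Prop) (L : V -> Prop) (a b c : V) :
  reaches E c a -> DLIntersec E L a b -> DLIntersec E L c b.
Proof.
  intros Hca [l [[Hl Hal] Hin]].
  exists l; split; [split; [exact Hl | exact (rt_trans _ _ _ _ _ Hca Hal)] | exact Hin].
Qed.

Theorem theorem2 (V : Type) (E : V -> V -> Prop) (L : V -> Prop) (x y : V) :
  ~ DLIntersec E L x y ->
  (DLIntersec E L x x \/ DLIntersec E L y y) ->
  ~ reaches E x y.
Proof.
  intros Hxy [Hxx | Hyy] Hreach; apply Hxy.
  - exact (DLIntersec_reaches_r E L x x y Hxx Hreach).
  - exact (DLIntersec_reaches_l E L y y x Hreach Hyy).
Qed.
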